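(* Let $K$ be a simplex in a topological vector space $F$ and let $T:K\to 2^{K}$ be a correspondence with *-weakly convex graph. Then there exists $x^*\in K$ such that $x^*\in\overline{T}(x^* )$.
   Context: A simplex is the convex hull of a finite affinely independent set. For $T:X\to 2^Y$: $\mathrm{Gr}(T)=\{(x,y)\in X\times Y:y\in T(x)\}$; $\overline{T}(x)=\{y\in Y:(x,y)\in\mathrm{cl}_{X\times Y}\mathrm{Gr}(T)\}$; for $V\subset F$, $T_V(x)=(T(x)+V)\cap Y$. Weakly convex graph: $T:X\to 2^Y$ ($X,Y$ nonempty convex) has weakly convex graph if for each finite set $\{x_1,\dots,x_n\}\subset X$ there exist $y_i\in T(x_i)$ such that $\mathrm{co}\{(x_1,y_1),\dots,(x_n,y_n)\}\subset\mathrm{Gr}(T)$, equivalently $\sum_i\lambda_iy_i\in T(\sum_i\lambda_ix_i)$ for all $(\lambda_1,\dots,\lambda_n)$ with $\lambda_i\ge0$, $\sum_i\lambda_i=1$. *-weakly convex graph: $T:X\to 2^Y$, with $Y\subset F$, has *-weakly convex graph if for each neighborhood $V$ of the origin in $F$ the correspondence $T_V$ has weakly convex graph. *)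

From Stdlib Require Import Reals.
Open Scope R_scope.

Record TVS := {
  tv :> Type;
  vadd : tv -> tv -> tv;
  vzero : tv;
  vopp : tv -> tv;
  vscal : R -> tv -> tv;
  vadd_assoc : forall x y z, vadd x (vadd y z) = vadd (vadd x y) z;
  vadd_comm : forall x y, vadd x y = vadd y x;
  vadd_0 : forall x, vadd x vzero = x;
  vadd_opp : forall x, vadd x (vopp x) = vzero;
  vscal_1 : forall x, vscal 1 x = x;
  vscal_assoc : forall a b x, vscal a (vscal b x) = vscal (a * b) x;
  vscal_distr_v : forall a x y, vscal a (vadd x y) = vadd (vscal a x) (vscal a y);
  vscal_distr_s : forall a b x, vscal (a + b) x = vadd (vscal a x) (vscal b x);
  vopen : (tv -> Prop) -> Prop;
  vopen_full : vopen (fun _ => True);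
  vopen_inter : forall U V, vopen U -> vopen V -> vopen (fun x => U x /\ V x);
  vopen_union : forall (I : Type) (U : I -> tv -> Prop),
      (forall i, vopen (U i)) -> vopen (fun x => exists i, U i x);
  vadd_cont : forall x y (W : tv -> Prop), vopen W -> W (vadd x y) ->
      exists U V, vopen U /\ vopen V /\ U x /\ V y /\
        (forall u v, U u -> V v -> W (vadd u v));
  vscal_cont : forall a x (W : tv -> Prop), vopen W -> W (vscal a x) ->
      exists d U, 0 < d /\ vopen U /\ U x /\
        (forall b u, Rabs (b - a) < d -> U u -> W (vscal b u))
}.

Arguments vadd {_}. Arguments vzero {_}. Arguments vopp {_}.
Arguments vscal {_}. Arguments vopen {_}.

Fixpoint vsum {F : TVS} (n : nat) (f : nat -> F) : F :=
  match n with O => vzero | S k => vadd (vsum k f) (f k) end.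
Fixpoint rsum (n : nat) (f : nat -> R) : R :=
  match n with O => 0 | S k => rsum k f + f k end.

Definition aff_indep {F : TVS} (n : nat) (v : nat -> F) : Prop :=
  forall c : nat -> R, rsum n c = 0 ->
    vsum n (fun i => vscal (c i) (v i)) = vzero ->
    forall i, (i < n)%nat -> c i = 0.

Definition conv_hull {F : TVS} (n : nat) (v : nat -> F) (x : F) : Prop :=
  exists lam : nat -> R, (forall i, (i < n)%nat -> 0 <= lam i) /\
    rsum n lam = 1 /\ x = vsum n (fun i => vscal (lam i) (v i)).

Definition is_simplex {F : TVS} (K : F -> Prop) : Prop :=
  exists (n : nat) (v : nat -> F), (0 < n)%nat /\ aff_indep n v /\
    (forall x, K x <-> conv_hull n v x).

(* T : X -> 2^Y is encoded as a relation: "T x y" means y \in T(x). *)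

Definition weakly_convex_graph {F : TVS} (X : F -> Prop) (T : F -> F -> Prop)
  : Prop :=
  forall (m : nat) (xs : nat -> F),
    (forall i, (i < m)%nat -> X (xs i)) ->
    (forall i j, (i < m)%nat -> (j < m)%nat -> xs i = xs j -> i = j) ->
    exists ys : nat -> F, (forall i, (i < m)%nat -> T (xs i) (ys i)) /\
      forall lam : nat -> R, (forall i, (i < m)%nat -> 0 <= lam i) ->
        rsum m lam = 1 ->
        T (vsum m (fun i => vscal (lam i) (xs i)))
          (vsum m (fun i => vscal (lam i) (ys i))).

Definition nbhd0 {F : TVS} (V : F -> Prop) : Prop :=
  exists U, vopen U /\ U vzero /\ (forall x, U x -> V x).

Definition T_V {F : TVS} (Y : F -> Prop) (T : F -> F -> Prop) (V : F -> Prop)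
  (x y : F) : Prop :=
  Y y /\ exists t v, T x t /\ V v /\ y = vadd t v.

Definition star_weakly_convex_graph {F : TVS} (X Y : F -> Prop)
  (T : F -> F -> Prop) : Prop :=
  forall V, nbhd0 V -> weakly_convex_graph X (T_V Y T V).

(* \overline{T}(x) = { y \in Y : (x,y) \in cl_{X x Y} Gr(T) },
   closure taken in the product topology (basic open boxes U x W). *)
Definition Tbar {F : TVS} (X Y : F -> Prop) (T : F -> F -> Prop) (x y : F)
  : Prop :=
  X x /\ Y y /\
  forall U W : F -> Prop, vopen U -> vopen W -> U x -> W y ->
    exists a b, X a /\ Y b /\ T a b /\ U a /\ W b.

(* The proof combines two facts.
   - Approximate fixed points exist at every scale [O] (a neighbourhood of the
     origin): weak convexity of the graph of [T_O] on the vertices yields a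
     stochastic matrix, and an almost invariant distribution of that Markov
     chain (a Cesaro average of its iterates) gives a point [x = t + w + e]
     with [t] in [T x] and [w], [e] in [O] ([approx_fixed_point]).
   - If [Tbar] had no fixed point, each point of [K] would have a box around
     [(x, x)] missing the graph of [T]; this excludes approximate fixed points
     of a small scale near [x] ([local_separation]), and compactness of the
     standard simplex ([prob_vec_compact], from Heine-Borel on [0,1]) makes the
     scale uniform ([uniform_separation]). *)

From Stdlib Require Import Reals Lra Lia List Classical ClassicalEpsilon.
Open Scope R_scope.

Section VectorAlgebra.
Context {F : TVS}.

Lemma vadd_0_l (x : F) : vadd vzero x = x.
Proof. rewrite vadd_comm; apply vadd_0. Qed.

Lemma vadd_cancel_l (a b c : F) : vadd a b = vadd a c -> b = c.
Proof.
  intro H.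
  assert (E : vadd (vopp a) (vadd a b) = vadd (vopp a) (vadd a c)) by now rewrite H.
  rewrite !vadd_assoc, (vadd_comm _ (vopp a) a), vadd_opp, !vadd_0_l in E.
  exact E.
Qed.

Lemma vadd_idem_0 (y : F) : vadd y y = y -> y = vzero.
Proof. intro H. apply (vadd_cancel_l y). now rewrite vadd_0. Qed.

Lemma vscal_0_l (x : F) : vscal 0 x = vzero.
Proof. apply vadd_idem_0. rewrite <- vscal_distr_s. f_equal; ring. Qed.

Lemma vscal_0_r (a : R) : vscal a (@vzero F) = vzero.
Proof. apply vadd_idem_0. now rewrite <- vscal_distr_v, vadd_0. Qed.

Lemma vadd_scal_m1 (x : F) : vadd x (vscal (-1) x) = vzero.
Proof.
  rewrite <- (vscal_1 F x) at 1. rewrite <- vscal_distr_s.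
  replace (1 + -1) with 0 by ring. apply vscal_0_l.
Qed.

Lemma vadd_shuffle (a b c d : F) :
  vadd (vadd a b) (vadd c d) = vadd (vadd a c) (vadd b d).
Proof.
  rewrite !vadd_assoc. f_equal. rewrite <- !vadd_assoc. f_equal. apply vadd_comm.
Qed.

Lemma vadd_sub2 (t w e : F) :
  vadd (vadd (vadd t w) e) (vadd (vscal (-1) w) (vscal (-1) e)) = t.
Proof.
  rewrite <- (vadd_assoc F t w e), <- vadd_assoc, vadd_shuffle, !vadd_scal_m1.
  now rewrite !vadd_0.
Qed.

End VectorAlgebra.

Section FiniteSums.
Context {F : TVS}.

Lemma vsum_ext n (f g : nat -> F) :
  (forall i, (i < n)%nat -> f i = g i) -> vsum n f = vsum n g.
Proof.
  induction n; intro H; simpl; auto.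
  rewrite IHn by (intros; apply H; lia). now rewrite H by lia.
Qed.

Lemma vsum_add n (f g : nat -> F) :
  vsum n (fun i => vadd (f i) (g i)) = vadd (vsum n f) (vsum n g).
Proof.
  induction n; simpl. { symmetry; apply vadd_0. }
  rewrite IHn. apply vadd_shuffle.
Qed.

Lemma vsum_zero n : vsum n (fun _ => @vzero F) = vzero.
Proof. induction n; simpl; auto. rewrite IHn; apply vadd_0. Qed.

Lemma vsum_scal n a (f : nat -> F) :
  vscal a (vsum n f) = vsum n (fun i => vscal a (f i)).
Proof.
  induction n; simpl. { apply vscal_0_r. }
  now rewrite vscal_distr_v, IHn.
Qed.

Lemma vsum_swap n m (g : nat -> nat -> F) :
  vsum n (fun i => vsum m (g i)) = vsum m (fun j => vsum n (fun i => g i j)).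
Proof.
  induction n; simpl. { symmetry; apply vsum_zero. }
  now rewrite IHn, <- vsum_add.
Qed.

Lemma vscal_rsum n a (x : F) :
  vscal (rsum n a) x = vsum n (fun i => vscal (a i) x).
Proof.
  induction n; simpl. { apply vscal_0_l. }
  now rewrite vscal_distr_s, IHn.
Qed.

End FiniteSums.

Lemma rsum_ext n (f g : nat -> R) :
  (forall i, (i < n)%nat -> f i = g i) -> rsum n f = rsum n g.
Proof.
  induction n; intro H; simpl; auto.
  rewrite IHn by (intros; apply H; lia). now rewrite H by lia.
Qed.

Lemma rsum_add n (f g : nat -> R) : rsum n (fun i => f i + g i) = rsum n f + rsum n g.
Proof. induction n; simpl; [ring|]. rewrite IHn; ring. Qed.

Lemma rsum_scal n a (f : nat -> R) : a * rsum n f = rsum n (fun i => a * f i).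
Proof. induction n; simpl; [ring|]. rewrite <- IHn; ring. Qed.

Lemma rsum_zero n : rsum n (fun _ => 0) = 0.
Proof. induction n; simpl; [ring|]. rewrite IHn; ring. Qed.

Lemma rsum_swap n m (g : nat -> nat -> R) :
  rsum n (fun i => rsum m (g i)) = rsum m (fun j => rsum n (fun i => g i j)).
Proof.
  induction n; simpl. { symmetry; apply rsum_zero. }
  now rewrite IHn, <- rsum_add.
Qed.

Lemma rsum_const n a : rsum n (fun _ => a) = INR n * a.
Proof. induction n; cbn [rsum]; [simpl; ring|]. rewrite IHn, S_INR. ring. Qed.

Lemma rsum_nonneg n (f : nat -> R) :
  (forall i, (i < n)%nat -> 0 <= f i) -> 0 <= rsum n f.
Proof.
  induction n; intro H; simpl; [lra|].
  assert (0 <= rsum n f) by (apply IHn; intros; apply H; lia).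
  assert (0 <= f n) by (apply H; lia). lra.
Qed.

Lemma rsum_entry_le n (f : nat -> R) k :
  (forall i, (i < n)%nat -> 0 <= f i) -> (k < n)%nat -> f k <= rsum n f.
Proof.
  induction n; intros H Hk; [lia|]. simpl.
  assert (0 <= rsum n f) by (apply rsum_nonneg; intros; apply H; lia).
  destruct (Nat.eq_dec k n) as [->|Hne]; [lra|].
  assert (f k <= rsum n f) by (apply IHn; [intros; apply H; lia | lia]).
  assert (0 <= f n) by (apply H; lia). lra.
Qed.

Lemma rsum_telescope k (g : nat -> R) :
  rsum k g - rsum k (fun m => g (S m)) = g O - g k.
Proof. induction k; cbn [rsum]; lra. Qed.

Definition comb {F : TVS} (n : nat) (v : nat -> F) (c : nat -> R) : F :=
  vsum n (fun i => vscal (c i) (v i)).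

Definition near (n : nat) (d : R) (a b : nat -> R) : Prop :=
  forall i, (i < n)%nat -> Rabs (a i - b i) < d.

Definition prob_vec (n : nat) (l : nat -> R) : Prop :=
  (forall i, (i < n)%nat -> 0 <= l i) /\ rsum n l = 1.

Definition unit_vec (k i : nat) : R := if Nat.eqb i k then 1 else 0.

Lemma rsum_unit n k : (k < n)%nat -> rsum n (unit_vec k) = 1.
Proof.
  unfold unit_vec. induction n as [|m IH]; intro Hk; [lia|]. simpl.
  destruct (Nat.eqb_spec m k) as [->|Hne].
  - rewrite (rsum_ext _ _ (fun _ => 0)), rsum_zero; [ring|].
    intros i Hi. destruct (Nat.eqb_spec i k); [lia | reflexivity].
  - rewrite IH by lia. ring.
Qed.

Section Combinations.
Context {F : TVS}.
Variables (n : nat) (v : nat -> F).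

Lemma comb_ext (a b : nat -> R) :
  (forall i, (i < n)%nat -> a i = b i) -> comb n v a = comb n v b.
Proof. intro H. apply vsum_ext. intros i Hi. now rewrite H. Qed.

Lemma comb_add (a b : nat -> R) :
  comb n v (fun i => a i + b i) = vadd (comb n v a) (comb n v b).
Proof.
  unfold comb. rewrite <- vsum_add. apply vsum_ext. intros. apply vscal_distr_s.
Qed.

Lemma comb_scal (s : R) (a : nat -> R) :
  comb n v (fun i => s * a i) = vscal s (comb n v a).
Proof.
  unfold comb. rewrite vsum_scal. apply vsum_ext. intros. symmetry; apply vscal_assoc.
Qed.

Lemma comb_zero : comb n v (fun _ => 0) = vzero.
Proof.
  unfold comb. rewrite <- (vsum_zero n). apply vsum_ext. intros; apply vscal_0_l.
Qed.

Lemma comb_unit k : (k < n)%nat -> comb n v (unit_vec k) = v k.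
Proof.
  unfold comb, unit_vec. induction n as [|m IH]; intro Hk; [lia|]. simpl.
  destruct (Nat.eqb m k) eqn:E.
  - apply Nat.eqb_eq in E; subst m.
    rewrite (vsum_ext _ _ (fun _ => vzero)), vsum_zero, vadd_0_l; [apply vscal_1|].
    intros i Hi. destruct (Nat.eqb_spec i k); [lia | apply vscal_0_l].
  - apply Nat.eqb_neq in E. rewrite IH by lia. now rewrite vscal_0_l, vadd_0.
Qed.

Lemma comb_comb (l : nat -> R) (M : nat -> nat -> R) :
  vsum n (fun i => vscal (l i) (comb n v (M i))) =
  comb n v (fun j => rsum n (fun i => l i * M i j)).
Proof.
  unfold comb.
  rewrite (vsum_ext _ _ (fun i => vsum n (fun j => vscal (l i * M i j) (v j)))).
  - rewrite vsum_swap. apply vsum_ext. intros j Hj. symmetry; apply vscal_rsum.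
  - intros i Hi. rewrite vsum_scal. apply vsum_ext. intros. apply vscal_assoc.
Qed.

Lemma comb_continuous (c : nat -> R) (W : F -> Prop) :
  vopen W -> W (comb n v c) ->
  exists d, 0 < d /\ forall nu, near n d nu c -> W (comb n v nu).
Proof.
  unfold comb, near. revert W. induction n as [|m IH]; intros W HW Hc.
  - exists 1; split; [lra|]. intros nu _. exact Hc.
  - simpl in Hc.
    destruct (vadd_cont F _ _ W HW Hc) as (U & V & HU & HV & Ux & Vy & HUV).
    destruct (IH U HU Ux) as (d1 & Hd1 & H1).
    destruct (vscal_cont F _ _ V HV Vy) as (d2 & U2 & Hd2 & HU2 & U2v & H2).
    exists (Rmin d1 d2); split; [now apply Rmin_pos|].
    intros nu Hnu. simpl. apply HUV.
    + apply H1. intros i Hi. eapply Rlt_le_trans; [apply Hnu; lia | apply Rmin_l].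
    + apply H2; auto. eapply Rlt_le_trans; [apply Hnu; lia | apply Rmin_r].
Qed.

(* Affinely independent points are pairwise distinct: [v i = v j] gives the
   vanishing affine relation [v i - v j = 0]. *)
Lemma aff_indep_inj : aff_indep n v ->
  forall i j, (i < n)%nat -> (j < n)%nat -> v i = v j -> i = j.
Proof.
  intros Hind i j Hi Hj Eij. destruct (Nat.eq_dec i j) as [|Hne]; auto. exfalso.
  set (c := fun k => unit_vec i k + (-1) * unit_vec j k).
  assert (Hsum : rsum n c = 0).
  { unfold c. rewrite rsum_add, <- rsum_scal, !rsum_unit by auto. ring. }
  assert (Hcomb : comb n v c = vzero).
  { unfold c. rewrite comb_add, comb_scal, !comb_unit, Eij by auto. apply vadd_scal_m1. }
  specialize (Hind c Hsum Hcomb i Hi). unfold c, unit_vec in Hind.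
  rewrite Nat.eqb_refl in Hind. apply Nat.eqb_neq in Hne. rewrite Hne in Hind. lra.
Qed.

End Combinations.

Lemma prob_vec_le1 n l i : prob_vec n l -> (i < n)%nat -> l i <= 1.
Proof. intros [Hpos Hsum] Hi. rewrite <- Hsum. now apply rsum_entry_le. Qed.

Lemma unit_vec_prob n k : (k < n)%nat -> prob_vec n (unit_vec k).
Proof.
  intro Hk. split; [|now apply rsum_unit].
  intros i _. unfold unit_vec. destruct (Nat.eqb i k); lra.
Qed.

Lemma rsum_near n (mu c : nat -> R) r :
  near n r mu c -> Rabs (rsum n mu - rsum n c) <= INR n * r.
Proof.
  unfold near. induction n as [|m IH]; intro H; cbn [rsum].
  - simpl. replace (0 - 0) with 0 by ring. rewrite Rabs_R0. lra.
  - rewrite S_INR.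
    replace (rsum m mu + mu m - (rsum m c + c m))
      with ((rsum m mu - rsum m c) + (mu m - c m)) by ring.
    eapply Rle_trans; [apply Rabs_triang|].
    assert (Rabs (rsum m mu - rsum m c) <= INR m * r) by (apply IH; intros; apply H; lia).
    assert (Rabs (mu m - c m) < r) by (apply H; lia). lra.
Qed.

(* Heine-Borel for [0,1], phrased as an adaptive finite cover: for every
   positive radius function [eps] finitely many centres [t] with their balls of
   radius [eps t] cover the interval. *)
Lemma interval_compact (eps : R -> R) : (forall t, 0 < eps t) ->
  exists L : list R, (forall t, In t L -> 0 <= t <= 1) /\
    forall s, 0 <= s <= 1 -> exists t, In t L /\ Rabs (s - t) < eps t.
Proof.
  intro Heps.
  set (fam := mkfamily (fun t => 0 <= t <= 1)
        (fun t y => 0 <= t <= 1 /\ Rabs (y - t) < eps t)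
        (fun t (H : exists y, 0 <= t <= 1 /\ Rabs (y - t) < eps t) =>
           match H with ex_intro _ y Hy => proj1 Hy end)).
  destruct (compact_P3 0 1 fam) as [D [Hcov [l Hl]]].
  - split.
    + intros x Hx. exists x. simpl. split; auto. replace (x - x) with 0 by ring.
      now rewrite Rabs_R0.
    + intros t y [Ht Hy].
      exists (mkposreal _ (Rgt_minus _ _ Hy)). intros z Hz. unfold disc in Hz; simpl in Hz.
      split; auto.
      replace (z - t) with ((z - y) + (y - t)) by ring.
      eapply Rle_lt_trans; [apply Rabs_triang | lra].
  - exists l. split.
    + intros t Ht. apply Hl in Ht. unfold subfamily, intersection_domain in Ht; simpl in Ht. tauto.
    + intros s Hs. destruct (Hcov s Hs) as [t [[Ht1 Ht2] HD]].
      exists t. split; auto. apply Hl. now split.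
Qed.

Definition list_min {A : Type} (f : A -> R) (L : list A) : R :=
  fold_right (fun c m => Rmin (f c) m) 1 L.

Lemma list_min_pos {A : Type} (f : A -> R) L : (forall c, 0 < f c) -> 0 < list_min f L.
Proof. intro H; induction L; simpl; [lra|]. now apply Rmin_pos. Qed.

Lemma list_min_le {A : Type} (f : A -> R) L c : In c L -> list_min f L <= f c.
Proof.
  induction L; simpl; [tauto|]. intros [->|H]; [apply Rmin_l|].
  eapply Rle_trans; [apply Rmin_r | auto].
Qed.

Definition box (n : nat) (c : nat -> R) : Prop := forall i, (i < n)%nat -> 0 <= c i <= 1.

Definition extend (n : nat) (c : nat -> R) (t : R) : nat -> R :=
  fun i => if Nat.ltb i n then c i else t.

(* Adaptive finite covers of the cube [0,1]^n, by induction on [n]: cover the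
   cube [0,1]^n for each value [t] of the last coordinate, then cover [0,1]
   with radii the minimal radius of the cover attached to [t]. *)
Lemma box_compact n (delta : (nat -> R) -> R) : (forall c, 0 < delta c) ->
  exists L : list (nat -> R), (forall c, In c L -> box n c) /\
    forall mu, box n mu -> exists c, In c L /\ near n (delta c) mu c.
Proof.
  unfold near. revert delta. induction n as [|n IH]; intros delta Hd.
  - exists ((fun _ => 0) :: nil). split.
    + intros c _ i Hi; lia.
    + intros mu _. exists (fun _ => 0). split; [now left | intros; lia].
  - destruct (choice (fun (t : R) (L : list (nat -> R)) =>
        (forall c, In c L -> box n c) /\
        forall mu, box n mu -> exists c, In c L /\
          forall i, (i < n)%nat -> Rabs (mu i - c i) < delta (extend n c t)))
      as [Lf HLf].
    { intro t. apply IH. intro; apply Hd. }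
    set (eps := fun t => list_min (fun c => delta (extend n c t)) (Lf t)).
    destruct (interval_compact eps) as [TL [HT1 HT2]].
    { intro t; apply list_min_pos; intro; apply Hd. }
    exists (flat_map (fun t => map (fun c => extend n c t) (Lf t)) TL). split.
    + intros c Hc. apply in_flat_map in Hc. destruct Hc as [t [Ht Hc]].
      apply in_map_iff in Hc. destruct Hc as [c' [<- Hc']].
      intros i Hi. unfold extend. destruct (Nat.ltb_spec i n).
      * now apply (proj1 (HLf t) c').
      * now apply HT1.
    + intros mu Hmu.
      destruct (HT2 (mu n)) as [t [Ht Hst]]; [apply Hmu; lia|].
      destruct (proj2 (HLf t) mu) as [c [Hc Hclose]]; [intros i Hi; apply Hmu; lia|].
      exists (extend n c t). split.
      * apply in_flat_map. exists t. split; auto. apply in_map_iff. now exists c.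
      * intros i Hi. unfold extend at 1. destruct (Nat.ltb_spec i n); [now apply Hclose|].
        replace i with n by lia.
        eapply Rlt_le_trans; [apply Hst|]. now apply list_min_le with (f := fun c => delta (extend n c t)).
Qed.

(* Cover the cube, using at a centre [c] off the simplex a radius so small that
   its ball misses the hyperplane [sum = 1]. *)
Lemma prob_vec_compact n (delta : (nat -> R) -> R) : (forall c, 0 < delta c) ->
  exists L : list (nat -> R), forall mu, prob_vec n mu ->
    exists c, In c L /\ prob_vec n c /\ near n (delta c) mu c.
Proof.
  intro Hd.
  set (gap := fun c => Rabs (rsum n c - 1) / (INR n + 1)).
  set (delta' := fun c => if Req_EM_T (rsum n c) 1 then delta c else gap c).
  assert (HnR : 0 <= INR n) by apply pos_INR.
  destruct (box_compact n delta') as [L [HLbox HLcov]].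
  { intro c. unfold delta', gap. destruct (Req_EM_T (rsum n c) 1) as [_|Hne]; auto.
    apply Rdiv_lt_0_compat; [apply Rabs_pos_lt|]; lra. }
  exists L. intros mu Hmu.
  destruct (HLcov mu) as [c [Hc Hnear]].
  { intros i Hi. split; [now apply Hmu | now apply (prob_vec_le1 n)]. }
  exists c. split; [exact Hc|].
  unfold delta' in Hnear. destruct (Req_EM_T (rsum n c) 1) as [Hsum|Hne].
  - split; [split; [intros i Hi; now apply (HLbox c Hc) | exact Hsum] | exact Hnear].
  - exfalso. apply rsum_near in Hnear. rewrite (proj2 Hmu) in Hnear.
    rewrite <- Rabs_Ropp in Hnear. replace (- (1 - rsum n c)) with (rsum n c - 1) in Hnear by ring.
    assert (Hg : 0 < Rabs (rsum n c - 1)) by (apply Rabs_pos_lt; lra).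
    unfold gap in Hnear.
    assert (INR n * (Rabs (rsum n c - 1) / (INR n + 1)) < Rabs (rsum n c - 1)); [|lra].
    apply Rmult_lt_reg_r with (INR n + 1); [lra|].
    replace (INR n * (Rabs (rsum n c - 1) / (INR n + 1)) * (INR n + 1))
      with (INR n * Rabs (rsum n c - 1)) by (field; lra).
    nra.
Qed.

Definition mat_act (n : nat) (M : nat -> nat -> R) (l : nat -> R) : nat -> R :=
  fun j => rsum n (fun i => l i * M i j).

Definition stochastic (n : nat) (M : nat -> nat -> R) : Prop :=
  forall i, (i < n)%nat -> prob_vec n (M i).

Section MarkovChain.
Variables (n : nat) (M : nat -> nat -> R).
Hypothesis HM : stochastic n M.

Lemma mat_act_prob l : prob_vec n l -> prob_vec n (mat_act n M l).
Proof.
  intros [Hpos Hsum]. unfold mat_act. split.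
  - intros j Hj. apply rsum_nonneg. intros i Hi.
    apply Rmult_le_pos; [auto | now apply (HM i Hi)].
  - rewrite rsum_swap, <- Hsum. apply rsum_ext. intros i Hi.
    rewrite <- rsum_scal, (proj2 (HM i Hi)). ring.
Qed.

Definition chain (e0 : nat -> R) (m : nat) : nat -> R := Nat.iter m (mat_act n M) e0.

Lemma chain_prob e0 m : prob_vec n e0 -> prob_vec n (chain e0 m).
Proof. intro He. induction m; simpl; auto. now apply mat_act_prob. Qed.

Definition cesaro (e0 : nat -> R) (k : nat) : nat -> R :=
  fun j => rsum k (fun m => chain e0 m j) / INR k.

Lemma cesaro_prob e0 k : (0 < k)%nat -> prob_vec n e0 -> prob_vec n (cesaro e0 k).
Proof.
  intros Hk He. assert (HkR : 0 < INR k) by (apply lt_0_INR; lia). split.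
  - intros j Hj. unfold cesaro, Rdiv. apply Rmult_le_pos.
    + apply rsum_nonneg. intros m _. now apply (chain_prob e0 m He).
    + left; now apply Rinv_0_lt_compat.
  - unfold cesaro, Rdiv.
    rewrite (rsum_ext n _ (fun j => / INR k * rsum k (fun m => chain e0 m j)))
      by (intros; ring).
    rewrite <- rsum_scal, rsum_swap.
    rewrite (rsum_ext k _ (fun _ => 1)) by (intros m _; apply (chain_prob e0 m He)).
    rewrite rsum_const. field. lra.
Qed.

(* The Cesaro average is almost invariant: one more step of the chain shifts it
   by [(e0 - chain e0 k) / k], a vector with entries of size at most [1/k]. *)
Lemma cesaro_almost_invariant e0 k j : (0 < k)%nat -> prob_vec n e0 -> (j < n)%nat ->
  Rabs (cesaro e0 k j - mat_act n M (cesaro e0 k) j) <= / INR k.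
Proof.
  intros Hk He Hj. assert (HkR : 0 < INR k) by (apply lt_0_INR; lia).
  assert (Hstep : mat_act n M (cesaro e0 k) j = rsum k (fun m => chain e0 (S m) j) / INR k).
  { unfold mat_act, cesaro, Rdiv. simpl.
    rewrite (rsum_ext n _ (fun i => / INR k * rsum k (fun m => chain e0 m i * M i j))).
    - rewrite <- rsum_scal, rsum_swap. apply Rmult_comm.
    - intros i _.
      replace (rsum k (fun m => chain e0 m i * M i j))
        with (M i j * rsum k (fun m => chain e0 m i))
        by (rewrite rsum_scal; apply rsum_ext; intros; ring).
      ring. }
  rewrite Hstep. unfold cesaro.
  replace (rsum k (fun m => chain e0 m j) / INR k - rsum k (fun m => chain e0 (S m) j) / INR k)
    with ((rsum k (fun m => chain e0 m j) - rsum k (fun m => chain e0 (S m) j)) / INR k)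
    by (field; lra).
  rewrite (rsum_telescope k (fun m => chain e0 m j)).
  pose proof (prob_vec_le1 n _ j (chain_prob e0 0 He) Hj).
  pose proof (prob_vec_le1 n _ j (chain_prob e0 k He) Hj).
  pose proof (proj1 (chain_prob e0 0 He) j Hj).
  pose proof (proj1 (chain_prob e0 k He) j Hj).
  unfold Rdiv. rewrite Rabs_mult, Rabs_inv, (Rabs_pos_eq (INR k)) by lra.
  rewrite <- (Rmult_1_l (/ INR k)) at 2.
  apply Rmult_le_compat_r; [left; now apply Rinv_0_lt_compat|].
  apply Rabs_le. simpl in *. lra.
Qed.

Lemma almost_invariant_distribution (eps : R) : (0 < n)%nat -> 0 < eps ->
  exists lam, prob_vec n lam /\ near n eps lam (mat_act n M lam).
Proof.
  intros Hn Heps. destruct (archimed_cor1 eps Heps) as [k [Hk Hk0]].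
  exists (cesaro (unit_vec 0) k). split.
  - apply cesaro_prob; [lia | now apply unit_vec_prob].
  - intros j Hj. eapply Rle_lt_trans; [|exact Hk].
    apply cesaro_almost_invariant; [lia | now apply unit_vec_prob | exact Hj].
Qed.

End MarkovChain.

Section Neighbourhoods.
Context {F : TVS}.

Lemma nbhd0_list_inter {A : Type} (O : A -> F -> Prop) (L : list A) :
  (forall c, In c L -> vopen (O c) /\ O c vzero) ->
  exists O' : F -> Prop, vopen O' /\ O' vzero /\
    forall z, O' z -> forall c, In c L -> O c z.
Proof.
  induction L as [|c L IH]; intro HO.
  - exists (fun _ => True). split; [apply vopen_full|]. split; [exact I|]. intros z _ c [].
  - destruct IH as (O' & HO'1 & HO'2 & HO'3); [intros; apply HO; now right|].
    destruct (HO c (or_introl eq_refl)) as [Hc1 Hc2].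
    exists (fun z => O c z /\ O' z). split; [now apply vopen_inter|]. split; [now split|].
    intros z [Hz1 Hz2] c' [<-|Hc']; auto.
Qed.

Lemma sub2_continuous (x : F) (W : F -> Prop) : vopen W -> W x ->
  exists (A O : F -> Prop), vopen A /\ vopen O /\ A x /\ O vzero /\
    forall a w e, A a -> O w -> O e ->
      W (vadd a (vadd (vscal (-1) w) (vscal (-1) e))).
Proof.
  intros HW Wx.
  assert (Wx0 : W (vadd x vzero)) by now rewrite vadd_0.
  destruct (vadd_cont F _ _ W HW Wx0) as (A & B & HA & HB & Ax & B0 & HAB).
  assert (B00 : B (vadd vzero vzero)) by now rewrite vadd_0.
  destruct (vadd_cont F _ _ B HB B00) as (B1 & B2 & HB1 & HB2 & B10 & B20 & HB12).
  assert (B1m : B1 (vscal (-1) vzero)) by now rewrite vscal_0_r.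
  destruct (vscal_cont F _ _ B1 HB1 B1m) as (d1 & U1 & Hd1 & HU1 & U10 & HU1').
  assert (B2m : B2 (vscal (-1) vzero)) by now rewrite vscal_0_r.
  destruct (vscal_cont F _ _ B2 HB2 B2m) as (d2 & U2 & Hd2 & HU2 & U20 & HU2').
  assert (Hm1 : forall d, 0 < d -> Rabs (-1 - -1) < d)
    by (intros; replace (-1 - -1) with 0 by ring; now rewrite Rabs_R0).
  exists A, (fun z => U1 z /\ U2 z). split; [exact HA|]. split; [now apply vopen_inter|].
  split; [exact Ax|]. split; [now split|].
  intros a w e Aa [Uw1 Uw2] [Ue1 Ue2]. apply HAB; [exact Aa|].
  apply HB12; [apply HU1' | apply HU2']; auto.
Qed.

End Neighbourhoods.

Definition approx_fixed {F : TVS} (T : F -> F -> Prop) (O : F -> Prop) (x : F) : Prop :=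
  exists t w e, O w /\ O e /\ T x t /\ x = vadd (vadd t w) e.

Section FixedPoint.
Context {F : TVS}.
Variables (K : F -> Prop) (T : F -> F -> Prop) (n : nat) (v : nat -> F).
Hypothesis HK : forall x, K x <-> conv_hull n v x.
Hypothesis HTK : forall x y, K x -> T x y -> K y.

Lemma comb_in_K l : prob_vec n l -> K (comb n v l).
Proof. intros [Hpos Hsum]. apply HK. now exists l. Qed.

Lemma K_comb x : K x -> exists l, prob_vec n l /\ x = comb n v l.
Proof. intro Hx. apply HK in Hx. destruct Hx as [l [Hpos [Hsum ->]]]. now exists l. Qed.

(* Where [Tbar] has no fixed point, approximate fixed points at a small scale
   are excluded locally: if [x = t + w + e] with [t] in [T x] and [x] close to
   the point, then [(x, t) = (x, x - w - e)] lies in a box around the point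
   that misses the graph of [T]. *)
Lemma local_separation c : prob_vec n c ->
  ~ Tbar K K T (comb n v c) (comb n v c) ->
  exists d (O : F -> Prop), 0 < d /\ vopen O /\ O vzero /\
    forall nu, prob_vec n nu -> near n d nu c -> ~ approx_fixed T O (comb n v nu).
Proof.
  intros Hc Hnfix. set (x := comb n v c).
  assert (Kx : K x) by now apply comb_in_K.
  assert (Hsep : exists U W : F -> Prop, vopen U /\ vopen W /\ U x /\ W x /\
      forall a b, K a -> K b -> T a b -> U a -> W b -> False).
  { apply NNPP. intro Hno. apply Hnfix. split; [exact Kx|]. split; [exact Kx|].
    intros U W HU HW Ux Wx. apply NNPP. intro Hnab. apply Hno.
    exists U, W. repeat split; auto. intros a b Ka Kb Tab Ua Wb. apply Hnab.
    now exists a, b. }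
  destruct Hsep as (U & W & HU & HW & Ux & Wx & Hsep).
  destruct (sub2_continuous x W HW Wx) as (A & O & HA & HO & Ax & O0 & HAO).
  destruct (comb_continuous n v c (fun z => A z /\ U z) (vopen_inter F _ _ HA HU) (conj Ax Ux))
    as (d & Hd & Hnear).
  exists d, O. split; [exact Hd|]. split; [exact HO|]. split; [exact O0|].
  intros nu Hnu Hclose (t & w & e & Ow & Oe & Ht & Heq).
  destruct (Hnear nu Hclose) as [Anu Unu].
  apply (Hsep (comb n v nu) t); auto.
  - now apply comb_in_K.
  - apply (HTK (comb n v nu)); [now apply comb_in_K | exact Ht].
  - rewrite <- (vadd_sub2 t w e), <- Heq. now apply HAO.
Qed.

(* Compactness of the simplex makes the scale uniform. *)
Lemma uniform_separation :
  (forall x, K x -> ~ Tbar K K T x x) ->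
  exists O : F -> Prop, vopen O /\ O vzero /\
    forall nu, prob_vec n nu -> ~ approx_fixed T O (comb n v nu).
Proof.
  intro Hnfix.
  destruct (choice (fun c (p : R * (F -> Prop)) => 0 < fst p /\ vopen (snd p) /\ snd p vzero /\
      (prob_vec n c -> forall nu, prob_vec n nu -> near n (fst p) nu c ->
         ~ approx_fixed T (snd p) (comb n v nu)))) as [P HP].
  { intro c. destruct (classic (prob_vec n c)) as [Hc|Hc].
    - destruct (local_separation c Hc) as (d & O & Hd & HO & O0 & Hloc).
      { apply Hnfix. now apply comb_in_K. }
      exists (d, O). simpl. auto.
    - exists (1, fun _ => True). simpl. split; [lra|]. split; [apply vopen_full|].
      split; [exact I|]. intro; contradiction. }
  destruct (prob_vec_compact n (fun c => fst (P c))) as [L HL]; [intro c; apply HP|].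
  destruct (nbhd0_list_inter (fun c => snd (P c)) L) as (O & HO & O0 & HOL).
  { intros c _. split; apply HP. }
  exists O. split; [exact HO|]. split; [exact O0|].
  intros nu Hnu (t & w & e & Ow & Oe & Ht & Heq).
  destruct (HL nu Hnu) as (c & Hc & Hcprob & Hnear).
  apply (proj2 (proj2 (proj2 (HP c))) Hcprob nu Hnu Hnear).
  exists t, w, e. repeat split; auto; now apply HOL.
Qed.

(* Apply weak convexity of the
   graph of [T_O] to the vertices: their chosen images [y_i = sum_j M_ij v_j]
   define a stochastic matrix [M], and for an almost invariant distribution
   [lam] of [M] the point [x = sum_i lam_i v_i] differs from
   [sum_i lam_i y_i = sum_j (lam M)_j v_j], which lies in [T x + O], by the
   small vector [e = sum_j (lam - lam M)_j v_j]. *)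
Lemma approx_fixed_point (O : F -> Prop) : (0 < n)%nat -> aff_indep n v ->
  star_weakly_convex_graph K K T -> vopen O -> O vzero ->
  exists nu, prob_vec n nu /\ approx_fixed T O (comb n v nu).
Proof.
  intros Hn Hind Hstar HO O0.
  assert (Hvert : forall i, (i < n)%nat -> K (v i)).
  { intros i Hi. rewrite <- (comb_unit n v i Hi). now apply comb_in_K, unit_vec_prob. }
  destruct (Hstar O (ex_intro _ O (conj HO (conj O0 (fun _ H => H)))) n v Hvert
      (aff_indep_inj n v Hind)) as [ys [Hys Hconv]].
  destruct (choice (fun i Mi => (i < n)%nat -> prob_vec n Mi /\ ys i = comb n v Mi))
    as [M HM].
  { intro i. destruct (Nat.lt_ge_cases i n) as [Hi|Hi].
    - destruct (K_comb (ys i) (proj1 (Hys i Hi))) as [l Hl]. now exists l.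
    - exists (fun _ => 0). intro; lia. }
  assert (HMst : stochastic n M) by (intros i Hi; apply HM, Hi).
  assert (O0' : O (comb n v (fun _ => 0))) by now rewrite comb_zero.
  destruct (comb_continuous n v (fun _ => 0) O HO O0') as (eta & Heta & Hsmall).
  destruct (almost_invariant_distribution n M HMst eta Hn Heta) as [lam [Hlam Hinv]].
  destruct (Hconv lam (proj1 Hlam) (proj2 Hlam)) as [_ (t & w & Ht & Ow & Hyw)].
  assert (Himage : vsum n (fun i => vscal (lam i) (ys i)) = comb n v (mat_act n M lam)).
  { unfold mat_act. rewrite <- comb_comb. apply vsum_ext. intros i Hi. now rewrite (proj2 (HM i Hi)). }
  set (e := comb n v (fun j => lam j - mat_act n M lam j)).
  assert (Oe : O e).
  { apply Hsmall. intros j Hj. rewrite Rminus_0_r. now apply Hinv. }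
  exists lam. split; [exact Hlam|]. exists t, w, e. repeat split; auto.
  rewrite <- Hyw, Himage. unfold e. rewrite <- comb_add.
  apply comb_ext. intros; ring.
Qed.

End FixedPoint.

Theorem theorem6 (F : TVS) (K : F -> Prop) (T : F -> F -> Prop) :
  is_simplex K ->
  (forall x y, K x -> T x y -> K y) ->
  star_weakly_convex_graph K K T ->
  exists x, K x /\ Tbar K K T x x.
Proof.
  intros (n & v & Hn & Hind & HK) HTK Hstar.
  apply NNPP. intro Hnone.
  assert (Hnfix : forall x, K x -> ~ Tbar K K T x x)
    by (intros x Kx Hx; apply Hnone; now exists x).
  destruct (uniform_separation K T n v HK HTK Hnfix) as (O & HO & O0 & Hsep).
  destruct (approx_fixed_point K T n v HK O Hn Hind Hstar HO O0) as (nu & Hnu & Happrox).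
  exact (Hsep nu Hnu Happrox).
Qed.
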